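(* Let $\rho$ be a function quasi-norm over a $\sigma$-finite measure space $(\Omega,\Sigma,\mu)$, let $X$ be a quasi-Banach space, and let $(x_n)_{n=1}^\infty$ be a sequence of measurable functions $\Omega\to X$ such that $\lim_n\rho(\|x_n(\cdot)-x(\cdot)\|)=0$ for some measurable $x\colon\Omega\to X$. Then there is a subsequence $(y_n)_{n=1}^\infty$ of $(x_n)_{n=1}^\infty$ with $\lim_ny_n=x$ a.e.
   Context: $L_0^+(\mu)$: measurable functions $\Omega\to[0,\infty]$ modulo a.e. equality; $\Sigma(\mu)=\{E\in\Sigma:\mu(E)<\infty\}$. A function quasi-norm over $(\Omega,\Sigma,\mu)$ is $\rho\colon L_0^+(\mu)\to[0,\infty]$ with (F1) $\rho(tf)=t\rho(f)$ for $t\ge0$; (F2) $f\le g$ a.e. $\Rightarrow\rho(f)\le\rho(g)$; (F3) $\rho(\chi_E)<\infty$ for $E\in\Sigma(\mu)$; (F4) for all $E\in\Sigma(\mu)$, $\varepsilon>0$ there is $\delta>0$ such that $\mu(A)\le\varepsilon$ whenever $A\in\Sigma$, $A\subseteq E$, $\rho(\chi_A)\le\delta$; (F5) there is $\kappa$ with $\rho(f+g)\le\kappa(\rho(f)+\rho(g))$. *)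

From HB Require Import structures.
From mathcomp Require Import all_boot all_order all_algebra.
From mathcomp Require Import all_classical all_reals all_analysis.
From mathcomp Require Import lebesgue_measure measurable_realfun.
Set Implicit Arguments. Unset Strict Implicit. Unset Printing Implicit Defensive.
Import Order.TTheory GRing.Theory Num.Theory.
Import numFieldNormedType.Exports.
Local Open Scope classical_set_scope.
Local Open Scope ring_scope.

Section Defs.
Context {d : measure_display} {T : measurableType d} {R : realType}.

(* representatives of elements of L_0^+(mu): measurable [0,oo]-valued functions *)
Definition L0p (f : T -> \bar R) : Prop :=
  measurable_fun setT f /\ (forall t, (0 <= f t)%E).

Definition chi (A : set T) : T -> \bar R := fun t => (\1_A t)%:E.

Definition function_quasinorm (mu : {measure set T -> \bar R})
  (rho : (T -> \bar R) -> \bar R) : Prop :=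
  (* well defined on a.e.-classes *)
  (forall f g, L0p f -> L0p g -> {ae mu, forall t, f t = g t} -> rho f = rho g) /\
  (forall (c : R) f, 0 <= c -> L0p f -> rho (fun t => c%:E * f t)%E = (c%:E * rho f)%E) /\
  (forall f g, L0p f -> L0p g -> {ae mu, forall t, (f t <= g t)%E} -> (rho f <= rho g)%E) /\
  (forall E, measurable E -> (mu E < +oo)%E -> (rho (chi E) < +oo)%E) /\
  (forall E, measurable E -> (mu E < +oo)%E -> forall eps : R, 0 < eps ->
     exists2 delta : R, 0 < delta &
       forall A, measurable A -> A `<=` E -> (rho (chi A) <= delta%:E)%E ->
         (mu A <= eps%:E)%E) /\
  (exists kappa : R, forall f g, L0p f -> L0p g ->
     (rho (fun t => f t + g t)%E <= kappa%:E * (rho f + rho g))%E).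

End Defs.

Definition quasi_banach (R : realType) (X : lmodType R) (nrm : X -> R) : Prop :=
  (forall x, 0 <= nrm x) /\
  (forall x, nrm x = 0 -> x = 0) /\
  (forall (a : R) x, nrm (a *: x) = `|a| * nrm x) /\
  (exists k : R, forall x y, nrm (x + y) <= k * (nrm x + nrm y)) /\
  (forall u : nat -> X,
     (forall e : R, 0 < e -> exists N : nat, forall m n, (N <= m)%N -> (N <= n)%N ->
        nrm (u m - u n) < e) ->
     exists l : X, (fun n => nrm (u n - l)) @ \oo --> (0 : R)).

Section Meas.
Context {d : measure_display} {T : measurableType d} {R : realType}.

Definition simple_fun (X : Type) (s : T -> X) : Prop :=
  finite_set (range s) /\ forall y : X, measurable (s @^-1` [set y]).

(* measurable (= strongly measurable) X-valued functions: a.e. limits of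
   simple functions in the quasi-norm of X *)
Definition strongly_measurable (mu : {measure set T -> \bar R})
  (X : lmodType R) (nrm : X -> R) (f : T -> X) : Prop :=
  exists s : nat -> T -> X, (forall k, simple_fun (s k)) /\
    {ae mu, forall t, (fun k => nrm (s k t - f t)) @ \oo --> (0 : R)}.
End Meas.

(* Since rho(g_n) -> 0, g_n -> 0 in measure on every set E of finite measure:
   (F1) and (F2) give eps * rho(chi_(E & [g_n > eps])) <= rho(g_n), and (F4)
   turns smallness of rho(chi_A) into smallness of mu(A).  Exhaust the space by
   a nondecreasing sequence F_k of sets of finite measure and pick phi(k) with
   mu(F_k & [g_phi(k) > 2^-(k+1)]) <= 2^-(k+1); by Borel-Cantelli almost every
   t eventually lies outside these sets, so g_phi(k)(t) -> 0. *)

From HB Require Import structures.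
From mathcomp Require Import all_boot all_order all_algebra.
From mathcomp Require Import all_classical all_reals all_analysis.
From mathcomp Require Import lebesgue_measure measurable_realfun.
Set Implicit Arguments.
Unset Strict Implicit.
Unset Printing Implicit Defensive.

Import Order.TTheory GRing.Theory Num.Theory.
Import numFieldNormedType.Exports.
Local Open Scope classical_set_scope.
Local Open Scope ring_scope.

Lemma L0p_chi d (T : measurableType d) (R : realType) (A : set T) :
  measurable A -> L0p (chi A : T -> \bar R).
Proof.
move=> mA; split; last by move=> t; rewrite lee_fin indicE ler0n.
by apply/measurable_EFinP; exact: measurable_indic.
Qed.

Definition cvg0_locally_in_measure d (T : measurableType d) (R : realType)
    (mu : {measure set T -> \bar R}) (g : nat -> T -> \bar R) :=
  forall E, measurable E -> (mu E < +oo)%E -> forall eps : R, 0 < eps ->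
  \forall n \near \oo, (mu (E `&` [set t | eps%:E < g n t]) <= eps%:E)%E.

Lemma borel_cantelli_ae d (T : measurableType d) (R : realType)
    (mu : {measure set T -> \bar R}) (B : (set T)^nat) :
  (forall k, measurable (B k)) -> (\sum_(k <oo) mu (B k) < +oo)%E ->
  {ae mu, forall t, \forall k \near \oo, ~ B k t}.
Proof.
move=> mB sumB; exists (lim_sup_set B); split.
- by apply: bigcapT_measurable => n; exact: bigcup_measurable.
- exact: lim_sup_set_cvg0.
move=> t /= not_eventually n _; apply: contrapT => notB.
by apply: not_eventually; exists n => // j /= nj Bj; apply: notB; exists j.
Qed.

Lemma increasing_above (N : nat -> nat) :
  exists phi : nat -> nat, {homo phi : m n / (m < n)%N} /\ forall k, (N k <= phi k)%N.
Proof.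
exists (fun k => \sum_(j < k.+1) (N j).+1)%N; split.
  apply: homo_ltn ltn_trans _ => k.
  by rewrite [ltnRHS]big_ord_recr /= -[ltnLHS]addn0 ltn_add2l.
by move=> k; rewrite big_ord_recr /= (leq_trans (leqnSn _)) ?leq_addl.
Qed.

Lemma eseries_geometric (R : realType) (a z : R) : `|z| < 1 ->
  (\sum_(k <oo) (geometric a z k)%:E)%E = (a / (1 - z))%:E.
Proof.
move=> z1; apply: cvg_lim => //.
rewrite [X in X @ _ --> _](_ : _ = fun n => (series (geometric a z) n)%:E).
  by apply: cvg_comp (cvg_geometric_series z1) _; exact: cvg_id.
by apply/funext => n; rewrite /= sumEFin.
Qed.

Lemma cvg0_locally_in_measure_ae_subseq d (T : measurableType d) (R : realType)
    (mu : {measure set T -> \bar R}) (g : nat -> T -> \bar R) :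
  sigma_finite setT mu -> (forall n, L0p (g n)) -> cvg0_locally_in_measure mu g ->
  exists phi : nat -> nat, {homo phi : m n / (m < n)%N} /\
    {ae mu, forall t, g (phi k) t @[k --> \oo] --> 0%E}.
Proof.
move=> /sigma_finiteP[F [FT F_nd F_fin]] Lg gcvg.
pose e k : R := geometric 2^-1 2^-1 k.
have half_lt1 : `|2^-1 : R| < 1 by rewrite ger0_norm ?invr_ge0 // invf_lt1 // ltr1n.
have e_gt0 k : 0 < e k by rewrite mulr_gt0 // exprn_gt0.
(* As F is nondecreasing, one finite-measure set per index k suffices:
   no diagonal argument over the F_i is needed. *)
have /choice[N gN] : forall k, exists N, forall n, (N <= n)%N ->
    (mu (F k `&` [set t | (e k)%:E < g n t]) <= (e k)%:E)%E.
  by move=> k; have [N _ gN] := gcvg _ (F_fin k).1 (F_fin k).2 _ (e_gt0 k); exists N.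
have [phi [phi_incr N_le_phi]] := increasing_above N.
pose B k := F k `&` [set t | ((e k)%:E < g (phi k) t)%E].
have mB k : measurable (B k).
  apply: (measurable_lte (f := fun=> (e k)%:E) (F_fin k).1 (measurable_cst _)).
  exact: measurable_funS measurableT (@subsetT _ _) (Lg _).1.
have sumB : (\sum_(k <oo) mu (B k) < +oo)%E.
  apply: (@le_lt_trans _ _ (\sum_(k <oo) (e k)%:E)%E).
    by apply: lee_nneseries => [k _ _|k _]; [exact: measure_ge0|exact: gN (N_le_phi k)].
  by rewrite eseries_geometric // ltry.
exists phi; split=> //.
apply: filterS (borel_cantelli_ae mB sumB) => t notB.
have [i _ Fit] : (\bigcup_i F i) t by rewrite -FT.
apply: (@squeeze_cvge _ _ _ _ (cst 0%E) _ (fun k => (e k)%:E)).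
- apply: filterS2 (nbhs_infty_ge i) notB => k ik notBk.
  rewrite /= (Lg (phi k)).2 /= leNgt; apply/negP => e_lt_g; apply: notBk; split=> //.
  by have /subsetPset := F_nd i k ik; apply.
- exact: cvg_cst.
- by apply: cvg_comp (cvg_geometric _ half_lt1) _; exact: cvg_id.
Qed.

Section function_quasinorm.
Context d (T : measurableType d) (R : realType).
Variables (mu : {measure set T -> \bar R}) (rho : (T -> \bar R) -> \bar R).
Hypothesis rhoF : function_quasinorm mu rho.

Lemma quasinorm_markov (f : T -> \bar R) (E : set T) (eps : R) :
  measurable E -> 0 < eps -> L0p f ->
  (eps%:E * rho (chi (E `&` [set t | eps%:E < f t])) <= rho f)%E.
Proof.
move=> mE eps0 Lf; have [_ [F1 [F2 _]]] := rhoF.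
set A := E `&` _.
have LA : L0p (chi A : T -> \bar R).
  exact/L0p_chi/(measurable_lte mE (measurable_cst _) (measurable_funS _ _ Lf.1)).
have LepsA : L0p (fun t => eps%:E * chi A t)%E.
  split; first exact: emeasurable_funM LA.1.
  by move=> t; rewrite mule_ge0 ?lee_fin ?(ltW eps0) ?LA.2.
rewrite -F1 ?(ltW eps0) //; apply: F2 => //; apply: aeW => t.
rewrite /chi indicE; have [|_] := boolP (t \in A).
  by rewrite inE => -[_ /ltW]; rewrite mule1.
by rewrite mule0 Lf.2.
Qed.

Lemma quasinorm_cvg_in_measure (g : nat -> T -> \bar R) :
  (forall n, L0p (g n)) -> rho (g n) @[n --> \oo] --> 0%E ->
  cvg0_locally_in_measure mu g.
Proof.
move=> Lg rho_g0 E mE muE eps eps0; have [_ [_ [_ [_ [F4 _]]]]] := rhoF.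
have [delta delta0 small_chi] := F4 E mE muE eps eps0.
have epsdelta0 : 0 < eps * delta by rewrite mulr_gt0.
have [N _ rho_small] := rho_g0 _ (@nbhs_open_ereal_lt R 0 (fun=> eps * delta) epsdelta0).
exists N => // n /rho_small /= rho_lt.
apply: small_chi.
- exact: (measurable_lte mE (measurable_cst _) (measurable_funS _ _ (Lg n).1)).
- by move=> t [].
rewrite -(@lee_pmul2l _ eps%:E) ?lte_fin // -EFinM.
exact/ltW/(le_lt_trans (quasinorm_markov mE eps0 (Lg n)) rho_lt).
Qed.

End function_quasinorm.

Theorem proposition3p13 (d : measure_display) (T : measurableType d) (R : realType)
  (mu : {measure set T -> \bar R}) (rho : (T -> \bar R) -> \bar R)
  (X : lmodType R) (nrm : X -> R) (xs : nat -> T -> X) (x : T -> X) :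
  sigma_finite setT mu ->
  function_quasinorm mu rho ->
  quasi_banach nrm ->
  (forall n, strongly_measurable mu nrm (xs n)) ->
  strongly_measurable mu nrm x ->
  (* rho(||x_n(.) - x(.)||) -> 0, where ||x_n - x|| is taken as an element of
     L_0^+(mu), represented by a measurable g n equal to it a.e. *)
  (exists g : nat -> T -> \bar R,
     (forall n, L0p (g n)) /\
     (forall n, {ae mu, forall t, g n t = (nrm (xs n t - x t))%:E}) /\
     (fun n => rho (g n)) @ \oo --> 0%E) ->
  exists phi : nat -> nat, {homo phi : m n / (m < n)%N} /\
    {ae mu, forall t, (fun n => nrm (xs (phi n) t - x t)) @ \oo --> (0 : R)}.
Proof.
move=> mu_sfin rhoF _ _ _ [g [Lg [gE rho_g0]]].
have [phi [phi_incr gphi0]] := cvg0_locally_in_measure_ae_subseq mu_sfin Lg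
  (quasinorm_cvg_in_measure rhoF Lg rho_g0).
exists phi; split=> //.
apply: filterS2 gphi0 (ae_foralln (fun n => gE (phi n))) => t gphi_t0 gphiE.
by move: gphi_t0; under eq_fun do rewrite gphiE; move/fine_cvg.
Qed.
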